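(* Consider a one-parameter quantum channel on $\mathbb{C}^d$ with a fixed pure input state $\rho_0=|\psi_0\rangle\langle\psi_0|$, canonical Kraus operators $\Upsilon_k(\theta)$, output state $\rho_{out}(\theta)$, SLD quantum information $H(\theta)$ of the family $\rho_{out}(\theta)$, and Sarovar–Milburn bound $C_\Upsilon(\theta)=4\sum_k \mathrm{tr}\{\Upsilon_k'(\theta)\rho_0\Upsilon_k'(\theta)^\dagger\}$ (all as defined in the context). Then $H(\theta)\le C_\Upsilon(\theta)$.
   Context: A one-parameter quantum channel is a map $\rho_0\mapsto\sum_k E_k(\theta)\rho_0E_k(\theta)^\dagger$ on density matrices on $\mathbb{C}^d$, with Kraus operators $E_k(\theta)$ depending differentiably on a real parameter $\theta$ and $\sum_k E_k(\theta)^\dagger E_k(\theta)=I$. The input state is a fixed, completely known pure state $\rho_0=|\psi_0\rangle\langle\psi_0|$. The canonical Kraus operators $\{\Upsilon_k(\theta)\}_{k=1}^d$ form a (differentiable) Kraus representation of the same channel satisfying $\mathrm{tr}\{\Upsilon_k(\theta)\rho_0\Upsilon_j(\theta)^\dagger\}=\delta_{jk}p_k(\theta)$ for all $j,k$. The output state is then $\rho_{out}(\theta)=\sum_k p_k(\theta)|w_k(\theta)\rangle\langle w_k(\theta)|$, where $\{|w_k(\theta)\rangle\}_{k=1}^d$ is an orthonormal basis depending differentiably on $\theta$ with $|w_k\rangle=p_k^{-1/2}\Upsilon_k|\psi_0\rangle$ whenever $p_k>0$. A prime denotes $d/d\theta$. The SLD quantum information is $H(\theta)=\mathrm{tr}\{\rho_{out}(\theta)\lambda(\theta)^2\}$,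 where $\lambda(\theta)$ is a self-adjoint solution of $\frac{d\rho_{out}}{d\theta}=\frac12(\rho_{out}\lambda+\lambda\rho_{out})$. *)

From HB Require Import structures.
From mathcomp Require Import all_boot all_order all_algebra.
From mathcomp Require Import complex.
From mathcomp Require Import all_classical all_reals.
From mathcomp Require Import topology normedtype derive.
Set Implicit Arguments. Unset Strict Implicit. Unset Printing Implicit Defensive.
Import Order.TTheory GRing.Theory Num.Theory.
Import numFieldNormedType.Exports.
Local Open Scope ring_scope.

Definition adj (R : rcfType) m n (A : 'M[R[i]]_(m, n)) : 'M[R[i]]_(n, m) :=
  (map_mx (@conjc R) A)^T.

Definition mx_derivable (R : realType) m n (M : R -> 'M[R[i]]_(m, n)) (t : R) :=
  forall i j, derivable (fun s : R => complex.Re (M s i j)) t 1 /\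
              derivable (fun s : R => complex.Im (M s i j)) t 1.

Definition mx_deriv (R : realType) m n (M : R -> 'M[R[i]]_(m, n)) (t : R)
  : 'M[R[i]]_(m, n) :=
  \matrix_(i, j) Complex (derive1 (fun s : R => complex.Re (M s i j)) t)
                         (derive1 (fun s : R => complex.Im (M s i j)) t).

From HB Require Import structures.
From mathcomp Require Import all_boot all_order all_algebra.
From mathcomp Require Import complex.
From mathcomp Require Import all_classical all_reals.
From mathcomp Require Import topology normedtype derive.
From mathcomp Require Import ring.
Import Order.TTheory GRing.Theory Num.Theory.
Import numFieldNormedType.Exports.
Local Open Scope ring_scope.
Set Implicit Arguments. Unset Strict Implicit. Unset Printing Implicit Defensive.

(* Writing psi_k = Upsilon_k psi0, the formula for w_k gives
   rho_out = sum_k psi_k psi_k^dagger, hence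
   rho_out' = sum_k (phi_k psi_k^dagger + psi_k phi_k^dagger) with phi_k = Upsilon_k' psi0.
   With a_k = lambda psi_k, the SLD equation gives
   H = tr(rho_out lambda^2) = sum_k |a_k|^2 = tr(rho_out' lambda) = sum_k 2 Re <a_k, phi_k>,
   so 0 <= sum_k |a_k - 2 phi_k|^2 = H - 2 H + 4 sum_k |phi_k|^2 = C_Upsilon - H.
   Neither the orthonormality of the w_k nor the Kraus operators E_k play a role. *)

Section ComplexDerivative.
Variable R : realType.
Local Notation C := R[i].
Implicit Types (f g : R -> C) (t : R) (a b : C).

Definition is_cderive f t a :=
  is_derive t 1 (fun s => complex.Re (f s)) (complex.Re a) /\
  is_derive t 1 (fun s => complex.Im (f s)) (complex.Im a).

Lemma is_cderive_cst (c : C) t : is_cderive (fun=> c) t 0.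
Proof. by split; apply: is_derive_cst. Qed.

Lemma is_cderiveD f g t a b : is_cderive f t a -> is_cderive g t b ->
  is_cderive (fun s => f s + g s) t (a + b).
Proof.
case: a b => [? ?] [? ?] [fRe fIm] [gRe gIm].
have ReD s : complex.Re (f s + g s) = complex.Re (f s) + complex.Re (g s).
  by case: (f s) (g s) => [? ?] [? ?].
have ImD s : complex.Im (f s + g s) = complex.Im (f s) + complex.Im (g s).
  by case: (f s) (g s) => [? ?] [? ?].
by split; [rewrite (funext ReD) | rewrite (funext ImD)]; apply: is_deriveD.
Qed.

Lemma is_cderiveM f g t a b : is_cderive f t a -> is_cderive g t b ->
  is_cderive (fun s => f s * g s) t (f t * b + a * g t).
Proof.
case: a b => [? ?] [? ?] [fRe fIm] [gRe gIm].
have ReM s : complex.Re (f s * g s) =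
    complex.Re (f s) * complex.Re (g s) - complex.Im (f s) * complex.Im (g s).
  by case: (f s) (g s) => [? ?] [? ?].
have ImM s : complex.Im (f s * g s) =
    complex.Re (f s) * complex.Im (g s) + complex.Im (f s) * complex.Re (g s).
  by case: (f s) (g s) => [? ?] [? ?].
split.
- rewrite (funext ReM).
  move/is_derive_eq: (is_deriveB (is_deriveM fRe gRe) (is_deriveM fIm gIm)); apply.
  by case: (f t) (g t) => [? ?] [? ?] /=; rewrite /GRing.scale /=; ring.
- rewrite (funext ImM).
  move/is_derive_eq: (is_deriveD (is_deriveM fRe gIm) (is_deriveM fIm gRe)); apply.
  by case: (f t) (g t) => [? ?] [? ?] /=; rewrite /GRing.scale /=; ring.
Qed.

Lemma is_cderiveJ f t a : is_cderive f t a -> is_cderive (fun s => (f s)^*%C) t a^*%C.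
Proof.
case: a => [? ?] [fRe fIm].
have ReJ s : complex.Re (f s)^*%C = complex.Re (f s) by case: (f s).
have ImJ s : complex.Im (f s)^*%C = - complex.Im (f s) by case: (f s).
by split; [rewrite (funext ReJ) | rewrite (funext ImJ); apply: is_deriveN].
Qed.

Lemma is_cderive_sum (I : finType) (F : I -> R -> C) (D : I -> C) t :
  (forall k, is_cderive (F k) t (D k)) ->
  is_cderive (fun s => \sum_k F k s) t (\sum_k D k).
Proof.
rewrite -fct_sumE => FD.
apply: (big_ind2 (fun f a => is_cderive f t a)) => //; first exact: is_cderive_cst.
by move=> f a g b; apply: is_cderiveD.
Qed.

Definition is_mxderive m n (M : R -> 'M[C]_(m, n)) t (D : 'M[C]_(m, n)) :=
  forall i j, is_cderive (fun s => M s i j) t (D i j).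

Lemma mx_derivableP m n (M : R -> 'M[C]_(m, n)) t :
  mx_derivable M t -> is_mxderive M t (mx_deriv M t).
Proof.
move=> Md i j; have [dRe dIm] := Md i j.
by rewrite mxE; split; rewrite /= derive1E; apply: derivableP.
Qed.

Lemma mx_deriveE m n (M : R -> 'M[C]_(m, n)) t D :
  is_mxderive M t D -> mx_deriv M t = D.
Proof.
move=> MD; apply/matrixP => i j; have [dRe dIm] := MD i j.
rewrite mxE !derive1E (@derive_val _ _ _ _ _ _ _ dRe) (@derive_val _ _ _ _ _ _ _ dIm).
by case: (D i j).
Qed.

Lemma is_mxderive_cst m n (A : 'M[C]_(m, n)) t : is_mxderive (fun=> A) t 0.
Proof. by move=> i j; rewrite mxE; apply: is_cderive_cst. Qed.

Lemma is_mxderiveM m n p (A : R -> 'M[C]_(m, n)) (B : R -> 'M[C]_(n, p)) t DA DB :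
  is_mxderive A t DA -> is_mxderive B t DB ->
  is_mxderive (fun s => A s *m B s) t (DA *m B t + A t *m DB).
Proof.
move=> AD BD i j; under eq_fun do rewrite mxE.
rewrite !mxE -big_split /=; apply: is_cderive_sum => l.
by rewrite addrC; apply: is_cderiveM.
Qed.

Lemma is_mxderive_adj m n (M : R -> 'M[C]_(m, n)) t D :
  is_mxderive M t D -> is_mxderive (fun s => adj (M s)) t (adj D).
Proof.
move=> MD i j; under eq_fun do rewrite !mxE.
by rewrite !mxE; apply: is_cderiveJ.
Qed.

Lemma is_mxderive_sum (I : finType) m n (F : I -> R -> 'M[C]_(m, n)) t D :
  (forall k, is_mxderive (F k) t (D k)) ->
  is_mxderive (fun s => \sum_k F k s) t (\sum_k D k).
Proof.
move=> FD i j; under eq_fun do rewrite summxE.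
by rewrite summxE; apply: is_cderive_sum => k; apply: FD.
Qed.

Lemma is_mxderive_sum_outer (I : finType) d (psi : I -> R -> 'cV[C]_d) t phi :
  (forall k, is_mxderive (psi k) t (phi k)) ->
  is_mxderive (fun s => \sum_k psi k s *m adj (psi k s)) t
    (\sum_k (phi k *m adj (psi k t) + psi k t *m adj (phi k))).
Proof.
move=> psiD; apply: is_mxderive_sum => k.
by apply: is_mxderiveM; last apply: is_mxderive_adj.
Qed.

End ComplexDerivative.

Section Adjoint.
Variable R : rcfType.
Local Notation C := R[i].

Lemma adjM m n p (A : 'M[C]_(m, n)) (B : 'M[C]_(n, p)) : adj (A *m B) = adj B *m adj A.
Proof. by rewrite /adj map_mxM trmx_mul. Qed.

Lemma adjZ m n (c : C) (A : 'M[C]_(m, n)) : adj (c *: A) = c^*%C *: adj A.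
Proof. by apply/matrixP => i j; rewrite !mxE rmorphM. Qed.

Definition cdot d (u v : 'cV[C]_d) : C := \tr (adj u *m v).

Variable d : nat.
Implicit Types u v : 'cV[C]_d.

Lemma cdotE u v : cdot u v = \sum_i (u i 0)^*%C * v i 0.
Proof. by rewrite /cdot /mxtrace big_ord1 mxE; apply: eq_bigr => i _; rewrite !mxE. Qed.

Lemma cdot_ge0 u : 0 <= cdot u u.
Proof. by rewrite cdotE; apply: sumr_ge0 => i _; rewrite mulrC mulcJ_ge0. Qed.

Lemma cdot_eq0 u : cdot u u = 0 -> u = 0.
Proof.
rewrite cdotE => /eqP; rewrite psumr_eq0 => [/allP u0|i _]; last by rewrite mulrC mulcJ_ge0.
apply/matrixP => i j; rewrite ord1 mxE.
by have := u0 i (mem_index_enum _); rewrite mulf_eq0 conjc_eq0 => /orP[] /eqP.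
Qed.

Lemma cdotZl (c : C) u v : cdot (c *: u) v = c^*%C * cdot u v.
Proof.
by rewrite !cdotE mulr_sumr; apply: eq_bigr => i _; rewrite mxE rmorphM mulrA.
Qed.

Lemma cdotZr (c : C) u v : cdot u (c *: v) = c * cdot u v.
Proof.
by rewrite !cdotE mulr_sumr; apply: eq_bigr => i _; rewrite mxE mulrCA.
Qed.

Lemma cdotBB u v : cdot (u - v) (u - v) = cdot u u - (cdot u v + cdot v u) + cdot v v.
Proof.
rewrite !cdotE -!big_split -sumrB -big_split /=.
by apply: eq_bigr => i _; rewrite !mxE rmorphB; ring.
Qed.

Lemma mxtrace_outer_mul u v (A : 'M[C]_d) : \tr (u *m adj v *m A) = cdot v (A *m u).
Proof. by rewrite -mulmxA mxtrace_mulC -mulmxA. Qed.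

Lemma cdot_mull (A : 'M[C]_d) u v : cdot (A *m u) v = cdot u (adj A *m v).
Proof. by rewrite /cdot adjM mulmxA. Qed.

Lemma mxtrace_conj_outer m (M : 'M[C]_(m, d)) u :
  \tr (M *m (u *m adj u) *m adj M) = cdot (M *m u) (M *m u).
Proof. by rewrite mulmxA -mulmxA -adjM mxtrace_mulC. Qed.

Lemma scale_outer_normalized u w :
  (0 < cdot u u -> w = (sqrtC (cdot u u))^-1 *: u) ->
  cdot u u *: (w *m adj w) = u *m adj u.
Proof.
have [/cdot_eq0 -> _|u_neq0 wE] := eqVneq (cdot u u) 0.
  by rewrite cdotE big1 ?scale0r ?mul0mx // => i _; rewrite mxE mulr0.
rewrite wE ?lt_def ?u_neq0 ?cdot_ge0 //.
set q := cdot u u; have s_neq0 : sqrtC q != 0 by rewrite sqrtC_eq0.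
have sJ : (sqrtC q)^*%C = sqrtC q by apply: geC0_conj; rewrite sqrtC_ge0 cdot_ge0.
rewrite adjZ -scalemxAl -scalemxAr !scalerA conjc_inv sJ.
by rewrite -mulrA -invfM -expr2 sqrtCK mulfV ?scale1r.
Qed.

End Adjoint.

Lemma sld_information_le (R : rcfType) (I : finType) d
    (psi phi : I -> 'cV[R[i]]_d) (rho lam : 'M[R[i]]_d) :
  rho = \sum_k psi k *m adj (psi k) -> adj lam = lam ->
  \sum_k (phi k *m adj (psi k) + psi k *m adj (phi k)) =
    2^-1 *: (rho *m lam + lam *m rho) ->
  \tr (rho *m lam *m lam) <= 4 * \sum_k cdot (phi k) (phi k).
Proof.
move=> rhoE lam_herm sld.
pose a k := lam *m psi k.
have cdot_lam u v : cdot (lam *m u) v = cdot u (lam *m v) by rewrite cdot_mull lam_herm.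
have infoE : \tr (rho *m lam *m lam) = \sum_k cdot (a k) (a k).
  rewrite rhoE !mulmx_suml raddf_sum /=; apply: eq_bigr => k _.
  by rewrite -mulmxA mxtrace_outer_mul -mulmxA -cdot_lam.
have info_drho : \tr (rho *m lam *m lam) =
    \sum_k (cdot (a k) (phi k) + cdot (phi k) (a k)).
  have -> : \tr (rho *m lam *m lam) =
      \tr ((\sum_k (phi k *m adj (psi k) + psi k *m adj (phi k))) *m lam).
    rewrite sld -scalemxAl mxtraceZ mulmxDl mxtraceD.
    have -> : \tr (lam *m rho *m lam) = \tr (rho *m lam *m lam).
      by rewrite -mulmxA mxtrace_mulC.
    by set x := \tr _; field.
  rewrite mulmx_suml raddf_sum /=; apply: eq_bigr => k _.
  by rewrite mulmxDl mxtraceD !mxtrace_outer_mul cdot_lam.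
have : 0 <= \sum_k cdot (a k - 2 *: phi k) (a k - 2 *: phi k).
  by apply: sumr_ge0 => k _; apply: cdot_ge0.
under eq_bigr do rewrite cdotBB !cdotZl !cdotZr conjc_nat mulrA -mulrDr.
rewrite big_split sumrB /= -!mulr_sumr -info_drho -infoE => expansion_ge0.
rewrite -subr_ge0; set S := \sum_k _ in expansion_ge0 *.
set H := \tr _ in expansion_ge0 *.
by have -> : 4 * S - H = H - 2 * H + 2 * 2 * S by ring.
Qed.

Theorem lemma1 (R : realType) (d n : nat)
  (E : 'I_n -> R -> 'M[R[i]]_d)          (* Kraus operators E_k(theta) *)
  (U : 'I_d -> R -> 'M[R[i]]_d)          (* canonical Kraus operators Upsilon_k(theta) *)
  (psi0 : 'cV[R[i]]_d)                   (* pure input state |psi0> *)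
  (w : 'I_d -> R -> 'cV[R[i]]_d)         (* orthonormal basis |w_k(theta)> *)
  (theta : R) (lam : 'M[R[i]]_d) :       (* parameter value, SLD lambda(theta) *)
  (forall k t, mx_derivable (E k) t) ->
  (forall t, \sum_k adj (E k t) *m E k t = 1%:M) ->
  (forall k t, mx_derivable (U k) t) ->
  (forall t, \sum_k adj (U k t) *m U k t = 1%:M) ->
  (forall t (rho : 'M[R[i]]_d),
      \sum_k U k t *m rho *m adj (U k t) = \sum_k E k t *m rho *m adj (E k t)) ->
  adj psi0 *m psi0 = 1%:M ->
  let rho0 := psi0 *m adj psi0 in
  let p k t := \tr (U k t *m rho0 *m adj (U k t)) in
  (forall t j k, \tr (U k t *m rho0 *m adj (U j t)) = (j == k)%:R * p k t) ->
  (forall k t, mx_derivable (w k) t) ->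
  (forall t j k, adj (w j t) *m w k t = (j == k)%:R%:M) ->
  (forall k t, 0 < p k t -> w k t = (sqrtC (p k t))^-1 *: (U k t *m psi0)) ->
  let rho_out t := \sum_k p k t *: (w k t *m adj (w k t)) in
  adj lam = lam ->
  mx_deriv rho_out theta = 2^-1 *: (rho_out theta *m lam + lam *m rho_out theta) ->
  \tr (rho_out theta *m lam *m lam)
    <= 4 * \sum_k \tr (mx_deriv (U k) theta *m rho0 *m adj (mx_deriv (U k) theta)).
Proof.
move=> _ _ U_derivable _ _ _ rho0 p _ _ _ wE rho_out lam_herm sld.
pose psi k t := U k t *m psi0.
have rho_outE : rho_out = fun t => \sum_k psi k t *m adj (psi k t).
  apply/funext => t; apply: eq_bigr => k _.
  rewrite /p mxtrace_conj_outer; apply: scale_outer_normalized.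
  by have := wE k t; rewrite /p mxtrace_conj_outer.
have psi_deriv k : is_mxderive (psi k) theta (mx_deriv (U k) theta *m psi0).
  have := is_mxderiveM (mx_derivableP (U_derivable k theta)) (is_mxderive_cst psi0 theta).
  by rewrite mulmx0 addr0.
under eq_bigr do rewrite mxtrace_conj_outer.
apply: sld_information_le lam_herm _; first by rewrite rho_outE.
by rewrite -(mx_deriveE (is_mxderive_sum_outer psi_deriv)) -rho_outE.
Qed.
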